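(* Let $X$ be a separable Banach space, $X\ne\{0\}$, and let $E_X$, $(e^X_n)$, $Q_X$ be as in the context. Let $(v_k)$ be a semi-normalized block sequence of $(e^X_n)$ such that $\|Q_X(v_k)\|_X\le 2^{-k}$ for every $k\in\mathbb{N}$. Then $(v_k)$ is equivalent to the standard unit vector basis of $c_0$.
   Context: Given a separable Banach space $X\neq\{0\}$ and a sequence $(x_n)$ (repetitions allowed) in the unit sphere of $X$ which is norm dense in the unit sphere, $E_X$ is the completion of $c_{00}(\mathbb{N})$ under the norm $\|z\|_{E_X}=\sup_{m\in\mathbb{N}}\|\sum_{n=0}^m z(n)x_n\|_X$; $(e^X_n)$ is the standard unit vector basis of $c_{00}(\mathbb{N})$ viewed in $E_X$ (a normalized monotone Schauder basis of $E_X$); $Q_X:E_X\to X$ is the unique bounded linear operator with $Q_X(e^X_n)=x_n$. A sequence is semi-normalized if its norms are bounded above and bounded away from $0$. *)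

From Stdlib Require Import Reals Lra ClassicalEpsilon.
Open Scope R_scope.

Record Banach := {
  B :> Type;
  bzero : B;
  badd : B -> B -> B;
  bopp : B -> B;
  bscale : R -> B -> B;
  bnorm : B -> R;
  badd_assoc : forall x y z, badd x (badd y z) = badd (badd x y) z;
  badd_comm : forall x y, badd x y = badd y x;
  badd_0 : forall x, badd x bzero = x;
  badd_opp : forall x, badd x (bopp x) = bzero;
  bscale_1 : forall x, bscale 1 x = x;
  bscale_assoc : forall a b x, bscale a (bscale b x) = bscale (a * b) x;
  bscale_addr : forall a x y, bscale a (badd x y) = badd (bscale a x) (bscale a y);
  bscale_addl : forall a b x, bscale (a + b) x = badd (bscale a x) (bscale b x);
  bnorm_eq0 : forall x, bnorm x = 0 -> x = bzero;
  bnorm_scale : forall a x, bnorm (bscale a x) = Rabs a * bnorm x;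
  bnorm_triangle : forall x y, bnorm (badd x y) <= bnorm x + bnorm y;
  bcomplete : forall u : nat -> B,
    (forall eps, 0 < eps -> exists N, forall m n, (N <= m)%nat -> (N <= n)%nat ->
        bnorm (badd (u m) (bopp (u n))) < eps) ->
    exists l, forall eps, 0 < eps -> exists N, forall n, (N <= n)%nat ->
        bnorm (badd (u n) (bopp l)) < eps
}.

Arguments bzero {_}.
Arguments badd {_}.
Arguments bopp {_}.
Arguments bscale {_}.
Arguments bnorm {_}.

Definition separable (X : Banach) : Prop :=
  exists d : nat -> X, forall y : X, forall eps, 0 < eps ->
    exists n, bnorm (badd y (bopp (d n))) < eps.

Definition dense_in_sphere (X : Banach) (x : nat -> X) : Prop :=
  (forall n, bnorm (x n) = 1) /\
  (forall y : X, bnorm y = 1 -> forall eps, 0 < eps ->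
     exists n, bnorm (badd y (bopp (x n))) < eps).

Definition finsupp (z : nat -> R) : Prop :=
  exists N, forall n, (N <= n)%nat -> z n = 0.

Fixpoint psum (X : Banach) (x : nat -> X) (z : nat -> R) (m : nat) : X :=
  match m with
  | O => bscale (z O) (x O)
  | S m' => badd (psum X x z m') (bscale (z (S m')) (x (S m')))
  end.

(* ||z||_{E_X} = sup_m || sum_{n=0}^m z(n) x_n ||_X  (chosen via epsilon as the lub) *)
Definition EXnorm (X : Banach) (x : nat -> X) (z : nat -> R) : R :=
  epsilon (inhabits 0)
    (fun r => is_lub (fun t => exists m, t = bnorm (psum X x z m)) r).

Definition QX (X : Banach) (x : nat -> X) (z : nat -> R) : X :=
  epsilon (inhabits bzero)
    (fun y => exists N, forall m, (N <= m)%nat -> psum X x z m = y).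

Definition block_seq (v : nat -> nat -> R) : Prop :=
  (forall k, exists n, v k n <> 0) /\
  exists p : nat -> nat, (forall k, (p k < p (S k))%nat) /\
    forall k n, ((n < p k)%nat \/ (p (S k) <= n)%nat) -> v k n = 0.

Definition semi_normalized (X : Banach) (x : nat -> X) (v : nat -> nat -> R) : Prop :=
  exists a b, 0 < a /\ forall k, a <= EXnorm X x (v k) <= b.

Fixpoint lincomb (a : nat -> R) (v : nat -> nat -> R) (K : nat) : nat -> R :=
  match K with
  | O => fun _ => 0
  | S K' => fun n => lincomb a v K' n + a K' * v K' n
  end.

(* c0 norm of sum_{k<K} a_k u_k : max_{k<K} |a_k| *)
Fixpoint maxabs (a : nat -> R) (K : nat) : R :=
  match K with
  | O => 0
  | S K' => Rmax (maxabs a K') (Rabs (a K'))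
  end.

Definition equiv_c0_basis (X : Banach) (x : nat -> X) (v : nat -> nat -> R) : Prop :=
  exists C, 0 < C /\ forall (a : nat -> R) (K : nat),
    / C * maxabs a K <= EXnorm X x (lincomb a v K) <= C * maxabs a K.

From Stdlib Require Import Reals Lra Lia ClassicalEpsilon Arith.
Open Scope R_scope.

(** Because the supports of the [v_k] are successive, a partial sum of
    [sum_{k<K} a_k v_k] consists of finished blocks, each equal to
    [a_k Q_X(v_k)] and thus of norm at most [|a_k| 2^-k], plus at most one
    unfinished block, of norm at most [|a_k| sup_j ||v_j||]; this gives the
    upper [c_0] estimate with constant [2 + sup_j ||v_j||].  Conversely every
    partial sum of [a_j v_j] is the difference of two partial sums of the
    combination, so [|a_j| ||v_j|| <= 2 ||sum_k a_k v_k||], and the lower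
    estimate follows from [inf_j ||v_j|| > 0]. *)

Section NormedSpace.

Variable X : Banach.
Implicit Types y z : X.

Lemma badd_0_l y : badd bzero y = y.
Proof. rewrite badd_comm. apply badd_0. Qed.

Lemma bscale_0_l y : bscale 0 y = bzero.
Proof.
  set (s := bscale 0 y).
  assert (Hss : badd s s = s) by (unfold s; now rewrite <- bscale_addl, Rplus_0_r).
  transitivity (badd (badd s s) (bopp s)).
  - now rewrite <- badd_assoc, badd_opp, badd_0.
  - rewrite Hss. apply badd_opp.
Qed.

Lemma bscale_0_r a : bscale a (@bzero X) = bzero.
Proof. now rewrite <- (bscale_0_l bzero), bscale_assoc, Rmult_0_r. Qed.

Lemma bnorm_0 : bnorm (@bzero X) = 0.
Proof. rewrite <- (bscale_0_l bzero), bnorm_scale, Rabs_R0. ring. Qed.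

Lemma bopp_scale y : bopp y = bscale (-1) y.
Proof.
  assert (Hinv : badd y (bscale (-1) y) = bzero).
  { rewrite <- (bscale_1 X y) at 1. rewrite <- bscale_addl, Rplus_opp_r.
    apply bscale_0_l. }
  rewrite <- (badd_0 X (bopp y)), <- Hinv, badd_assoc,
    (badd_comm X (bopp y) y), badd_opp.
  apply badd_0_l.
Qed.

Lemma bnorm_opp y : bnorm (bopp y) = bnorm y.
Proof.
  rewrite bopp_scale, bnorm_scale, Rabs_left by lra. ring.
Qed.

Lemma bnorm_nonneg y : 0 <= bnorm y.
Proof.
  pose proof (bnorm_triangle X y (bopp y)) as H.
  rewrite badd_opp, bnorm_0, bnorm_opp in H. lra.
Qed.

Lemma badd_addK_l y z : badd (badd y z) (bopp y) = z.
Proof. rewrite (badd_comm X y z), <- badd_assoc, badd_opp. apply badd_0. Qed.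

Lemma badd_shuffle y1 y2 z1 z2 :
  badd (badd y1 y2) (badd z1 z2) = badd (badd y1 z1) (badd y2 z2).
Proof.
  rewrite !badd_assoc. f_equal. rewrite <- !badd_assoc. f_equal. apply badd_comm.
Qed.

End NormedSpace.

Section PartialSums.

Variable X : Banach.
Variable x : nat -> X.
Implicit Types z : nat -> R.

Lemma psum_linear z1 z2 c m :
  psum X x (fun n => z1 n + c * z2 n) m =
  badd (psum X x z1 m) (bscale c (psum X x z2 m)).
Proof.
  induction m as [|m IH]; simpl.
  - now rewrite bscale_addl, bscale_assoc.
  - rewrite IH, bscale_addr, bscale_addl, bscale_assoc. apply badd_shuffle.
Qed.

Lemma psum_eq_0 z m : (forall n, (n <= m)%nat -> z n = 0) -> psum X x z m = bzero.
Proof.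
  induction m as [|m IH]; intro Hz; simpl.
  - rewrite Hz by lia. apply bscale_0_l.
  - rewrite IH by (intros; apply Hz; lia).
    rewrite Hz, bscale_0_l by lia. apply badd_0.
Qed.

Lemma psum_stationary z N m :
  (forall n, (N < n)%nat -> z n = 0) -> (N <= m)%nat -> psum X x z m = psum X x z N.
Proof.
  intros Hz Hm. induction Hm as [|m Hm IH]; [reflexivity|].
  simpl. now rewrite Hz, bscale_0_l, badd_0 by lia.
Qed.

Lemma psum_bounded_upto z N : exists M, forall m, (m <= N)%nat -> bnorm (psum X x z m) <= M.
Proof.
  induction N as [|N [M IH]].
  - exists (bnorm (psum X x z 0)). intros m Hm. replace m with 0%nat by lia. lra.
  - exists (Rmax M (bnorm (psum X x z (S N)))). intros m Hm.
    destruct (Nat.eq_dec m (S N)) as [->|Hne]; [apply Rmax_r|].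
    eapply Rle_trans; [apply IH; lia|apply Rmax_l].
Qed.

Lemma psum_bounded z : finsupp z -> exists M, forall m, bnorm (psum X x z m) <= M.
Proof.
  intros [N HN]. destruct (psum_bounded_upto z N) as [M HM]. exists M. intro m.
  destruct (le_lt_dec m N) as [Hm|Hm]; [now apply HM|].
  rewrite (psum_stationary z N m); [apply HM | intros; apply HN |]; lia.
Qed.

Lemma EXnorm_is_lub z : finsupp z ->
  is_lub (fun t => exists m, t = bnorm (psum X x z m)) (EXnorm X x z).
Proof.
  intro Hz. unfold EXnorm. apply epsilon_spec.
  destruct (psum_bounded z Hz) as [M HM].
  destruct (completeness (fun t => exists m, t = bnorm (psum X x z m))) as [l Hl].
  - exists M. intros t [m ->]. apply HM.
  - now exists (bnorm (psum X x z 0)), 0%nat.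
  - now exists l.
Qed.

Lemma psum_le_EXnorm z m : finsupp z -> bnorm (psum X x z m) <= EXnorm X x z.
Proof. intro Hz. apply (EXnorm_is_lub z Hz). now exists m. Qed.

Lemma EXnorm_nonneg z : finsupp z -> 0 <= EXnorm X x z.
Proof.
  intro Hz. eapply Rle_trans; [apply bnorm_nonneg|apply (psum_le_EXnorm z 0 Hz)].
Qed.

Lemma EXnorm_le z M : finsupp z -> (forall m, bnorm (psum X x z m) <= M) ->
  EXnorm X x z <= M.
Proof. intros Hz HM. apply (EXnorm_is_lub z Hz). intros t [m ->]. apply HM. Qed.

Lemma QX_stationary z N :
  (forall m, (N <= m)%nat -> psum X x z m = psum X x z N) -> QX X x z = psum X x z N.
Proof.
  intro HN. unfold QX.
  destruct (epsilon_spec (inhabits bzero)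
    (fun y => exists N, forall m, (N <= m)%nat -> psum X x z m = y)) as [N' HN'].
  - now exists (psum X x z N), N.
  - rewrite <- (HN' (Nat.max N N')) by lia. apply HN; lia.
Qed.

Lemma psum_lincomb_0 a v m : psum X x (lincomb a v 0) m = bzero.
Proof. now apply psum_eq_0. Qed.

Lemma psum_lincomb_S a v K m :
  psum X x (lincomb a v (S K)) m =
  badd (psum X x (lincomb a v K) m) (bscale (a K) (psum X x (v K) m)).
Proof. apply psum_linear. Qed.

End PartialSums.

Lemma maxabs_nonneg a K : 0 <= maxabs a K.
Proof.
  induction K as [|K IH]; simpl; [lra|].
  eapply Rle_trans; [exact IH|apply Rmax_l].
Qed.

Lemma maxabs_scaled_le a K c d :
  0 <= c -> 0 <= d -> (forall j, (j < K)%nat -> c * Rabs (a j) <= d) ->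
  c * maxabs a K <= d.
Proof.
  intros Hc Hd Ha. induction K as [|K IH]; simpl; [lra|].
  unfold Rmax. destruct (Rle_dec _ _); [apply Ha|apply IH; intros; apply Ha]; lia.
Qed.

(** Throughout, block [k] is supported in [[p k, p (S k))], and [psum _ _ z m]
    sums the first [S m] coordinates: it has not reached block [k] when
    [S m <= p k] and contains all of it when [p (S k) <= S m]. *)
Section Blocks.

Variable X : Banach.
Variable x : nat -> X.
Variable v : nat -> nat -> R.
Variable p : nat -> nat.
Hypothesis p_incr : forall k, (p k < p (S k))%nat.
Hypothesis v_supp : forall k n, ((n < p k)%nat \/ (p (S k) <= n)%nat) -> v k n = 0.
Variable a : nat -> R.

Lemma p_le i k : (i <= k)%nat -> (p i <= p k)%nat.
Proof. intro H. induction H as [|k H IH]; [lia|]. pose proof (p_incr k). lia. Qed.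

Lemma psum_block_before k m : (S m <= p k)%nat -> psum X x (v k) m = bzero.
Proof. intro Hm. apply psum_eq_0. intros n Hn. apply v_supp. lia. Qed.

Lemma psum_block_after k m :
  (p (S k) <= S m)%nat -> psum X x (v k) m = psum X x (v k) (pred (p (S k))).
Proof.
  intro Hm. pose proof (p_incr k).
  apply psum_stationary; [|lia]. intros n Hn. apply v_supp. lia.
Qed.

Lemma block_finsupp k : finsupp (v k).
Proof. exists (p (S k)). intros n Hn. apply v_supp. lia. Qed.

Lemma lincomb_finsupp K : finsupp (lincomb a v K).
Proof.
  exists (p K). induction K as [|K IH]; intros n Hn; simpl; [reflexivity|].
  pose proof (p_incr K). rewrite IH, v_supp by lia. ring.
Qed.

Lemma psum_block_after_QX k m :
  (p (S k) <= S m)%nat -> psum X x (v k) m = QX X x (v k).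
Proof.
  intro Hm. rewrite psum_block_after by exact Hm. symmetry.
  apply QX_stationary. intros m' Hm'. apply psum_block_after.
  pose proof (p_incr k). lia.
Qed.

Lemma psum_lincomb_stationary j m m' :
  (p j <= S m)%nat -> (p j <= S m')%nat ->
  psum X x (lincomb a v j) m = psum X x (lincomb a v j) m'.
Proof.
  revert m m'. induction j as [|j IH]; intros m m' Hm Hm'.
  - now rewrite !psum_lincomb_0.
  - pose proof (p_incr j). rewrite !psum_lincomb_S, (IH m m') by lia.
    now rewrite (psum_block_after j m), (psum_block_after j m') by lia.
Qed.

Lemma psum_lincomb_truncate j K m :
  (j <= K)%nat -> (S m <= p j)%nat ->
  psum X x (lincomb a v K) m = psum X x (lincomb a v j) m.
Proof.
  intros HK Hm. induction HK as [|K HK IH]; [reflexivity|].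
  rewrite psum_lincomb_S, IH, psum_block_before, bscale_0_r by
    (pose proof (p_le j K HK); lia).
  apply badd_0.
Qed.

Lemma psum_lincomb_prefix j K m :
  (S j <= K)%nat -> (p (S j) <= S m)%nat ->
  psum X x (lincomb a v (S j)) m = psum X x (lincomb a v K) (pred (p (S j))).
Proof.
  intros HK Hm. pose proof (p_incr j).
  rewrite (psum_lincomb_truncate (S j) K (pred (p (S j)))) by lia.
  apply psum_lincomb_stationary; lia.
Qed.

Lemma psum_lincomb_prefix_le j K m :
  (j <= K)%nat -> (p j <= S m)%nat ->
  bnorm (psum X x (lincomb a v j) m) <= EXnorm X x (lincomb a v K).
Proof.
  intros HK Hm. destruct j as [|j].
  - rewrite psum_lincomb_0, bnorm_0. apply EXnorm_nonneg, lincomb_finsupp.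
  - rewrite (psum_lincomb_prefix j K) by lia.
    apply psum_le_EXnorm, lincomb_finsupp.
Qed.

Lemma bscale_psum_block j K m :
  (j < K)%nat -> (S m <= p (S j))%nat ->
  bscale (a j) (psum X x (v j) m) =
  badd (psum X x (lincomb a v K) m) (bopp (psum X x (lincomb a v j) m)).
Proof.
  intros HK Hm. rewrite (psum_lincomb_truncate (S j)), psum_lincomb_S by lia.
  symmetry. apply badd_addK_l.
Qed.

Lemma scaled_psum_block_le j K m : (j < K)%nat ->
  Rabs (a j) * bnorm (psum X x (v j) m) <= 2 * EXnorm X x (lincomb a v K).
Proof.
  intro HK.
  assert (Hinside : forall m, (p j <= S m)%nat -> (S m <= p (S j))%nat ->
            Rabs (a j) * bnorm (psum X x (v j) m) <= 2 * EXnorm X x (lincomb a v K)).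
  { intros m' H1 H2. rewrite <- bnorm_scale, (bscale_psum_block j K) by lia.
    eapply Rle_trans; [apply bnorm_triangle|]. rewrite bnorm_opp.
    pose proof (psum_le_EXnorm X x _ m' (lincomb_finsupp K)).
    pose proof (psum_lincomb_prefix_le j K m' ltac:(lia) H1). lra. }
  destruct (le_lt_dec (S m) (p j)) as [H1|H1].
  - rewrite psum_block_before, bnorm_0, Rmult_0_r by exact H1.
    pose proof (EXnorm_nonneg X x _ (lincomb_finsupp K)). lra.
  - destruct (le_lt_dec (S m) (p (S j))) as [H2|H2]; [apply Hinside; lia|].
    pose proof (p_incr j). rewrite psum_block_after by lia. apply Hinside; lia.
Qed.

Lemma coef_le_EXnorm_lincomb a0 j K :
  a0 <= EXnorm X x (v j) -> (j < K)%nat ->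
  a0 * Rabs (a j) <= 2 * EXnorm X x (lincomb a v K).
Proof.
  intros Ha0 HK. set (E := EXnorm X x (lincomb a v K)).
  destruct (Req_dec (a j) 0) as [Haj|Haj].
  - rewrite Haj, Rabs_R0, Rmult_0_r.
    pose proof (EXnorm_nonneg X x _ (lincomb_finsupp K)). unfold E. lra.
  - assert (Hpos : 0 < Rabs (a j)) by now apply Rabs_pos_lt.
    assert (Hv : EXnorm X x (v j) <= 2 * E / Rabs (a j)).
    { apply EXnorm_le; [apply block_finsupp|]. intro m.
      apply (Rmult_le_reg_l (Rabs (a j))); [exact Hpos|].
      replace (Rabs (a j) * (2 * E / Rabs (a j))) with (2 * E) by (field; lra).
      now apply scaled_psum_block_le. }
    replace (2 * E) with (2 * E / Rabs (a j) * Rabs (a j)) by (field; lra).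
    apply Rmult_le_compat_r; lra.
Qed.

Lemma maxabs_le_EXnorm_lincomb a0 K :
  0 <= a0 -> (forall j, a0 <= EXnorm X x (v j)) ->
  a0 * maxabs a K <= 2 * EXnorm X x (lincomb a v K).
Proof.
  intros Ha0 Hv. apply maxabs_scaled_le; [exact Ha0| |].
  - pose proof (EXnorm_nonneg X x _ (lincomb_finsupp K)). lra.
  - intros j Hj. now apply coef_le_EXnorm_lincomb.
Qed.

Section UpperEstimate.

Variable b : R.
Hypothesis block_le : forall k, EXnorm X x (v k) <= b.
Hypothesis QX_block_le : forall k, bnorm (QX X x (v k)) <= / 2 ^ k.

(** [2 - 2 / 2 ^ K = sum_{k<K} 2^-k] bounds the finished blocks. *)
Lemma psum_lincomb_le K m :
  bnorm (psum X x (lincomb a v K) m) <= maxabs a K * (2 + b) /\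
  ((p K <= S m)%nat -> bnorm (psum X x (lincomb a v K) m) <= maxabs a K * (2 - 2 / 2 ^ K)).
Proof.
  assert (Hb : forall k m, bnorm (psum X x (v k) m) <= b).
  { intros k m'. eapply Rle_trans; [apply psum_le_EXnorm, block_finsupp|apply block_le]. }
  assert (Hb0 : 0 <= b) by (eapply Rle_trans; [apply bnorm_nonneg|apply (Hb 0%nat 0%nat)]).
  revert m. induction K as [|K IH]; intro m.
  { rewrite psum_lincomb_0, bnorm_0. simpl. split; intros; lra. }
  destruct (IH m) as [IH1 IH2].
  rewrite psum_lincomb_S.
  set (L := psum X x (lincomb a v K) m) in *.
  set (P := psum X x (v K) m).
  assert (Htri : bnorm (badd L (bscale (a K) P)) <= bnorm L + Rabs (a K) * bnorm P).
  { rewrite <- bnorm_scale. apply bnorm_triangle. }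
  set (M := maxabs a K) in *. set (M' := maxabs a (S K)).
  assert (HMM' : M <= M') by apply Rmax_l.
  assert (HaM' : Rabs (a K) <= M') by apply Rmax_r.
  assert (HM0 : 0 <= M) by apply maxabs_nonneg.
  assert (Ht : 0 < / 2 ^ K <= 1).
  { split; [apply Rinv_0_lt_compat, pow_lt; lra|].
    rewrite <- Rinv_1. apply Rinv_le_contravar; [lra|apply pow_R1_Rle; lra]. }
  assert (HtS : 2 / 2 ^ S K = / 2 ^ K) by (simpl; field; apply pow_nonzero; lra).
  unfold Rdiv in *. rewrite HtS. set (t := / 2 ^ K) in *.
  pose proof (Rabs_pos (a K)). pose proof (bnorm_nonneg X P).
  destruct (le_lt_dec (S m) (p K)) as [Hbefore|Hafter].
  - assert (HP : bnorm P = 0) by (unfold P; now rewrite psum_block_before, bnorm_0).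
    rewrite HP in Htri.
    split; [nra|]. intro. pose proof (p_incr K). lia.
  - assert (HL : bnorm L <= M * (2 - 2 * t)) by (apply IH2; lia).
    destruct (le_lt_dec (p (S K)) (S m)) as [Hdone|Hpart].
    + assert (HP : bnorm P <= t).
      { unfold P. rewrite psum_block_after_QX by exact Hdone. apply QX_block_le. }
      split; intros; nra.
    + assert (HP : bnorm P <= b) by apply Hb.
      split; [nra|]. intro. lia.
Qed.

Lemma EXnorm_lincomb_le K : EXnorm X x (lincomb a v K) <= maxabs a K * (2 + b).
Proof.
  apply EXnorm_le; [apply lincomb_finsupp|]. intro m. apply psum_lincomb_le.
Qed.

End UpperEstimate.

End Blocks.

Theorem proposition17 (X : Banach) (x : nat -> X) (v : nat -> nat -> R) :
  separable X ->
  (exists y : X, y <> bzero) ->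
  dense_in_sphere X x ->
  block_seq v ->
  semi_normalized X x v ->
  (forall k, bnorm (QX X x (v k)) <= / 2 ^ k) ->
  equiv_c0_basis X x v.
Proof.
  (* Separability, [X <> 0] and density only make [E_X] a space with a basis;
     the estimates do not use them. *)
  intros _ _ _ [_ [p [p_incr v_supp]]] [a0 [b [Ha0 Hv]]] HQ.
  set (C := Rmax (2 / a0) (2 + b)).
  assert (HC1 : 2 / a0 <= C) by apply Rmax_l.
  assert (HC2 : 2 + b <= C) by apply Rmax_r.
  assert (HC0 : 0 < C) by (eapply Rlt_le_trans; [|exact HC1]; apply Rdiv_lt_0_compat; lra).
  exists C. split; [exact HC0|]. intros a K.
  pose proof (maxabs_nonneg a K).
  pose proof (EXnorm_lincomb_le X x v p p_incr v_supp a b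
    (fun k => proj2 (Hv k)) HQ K) as Hupper.
  pose proof (maxabs_le_EXnorm_lincomb X x v p p_incr v_supp a a0 K
    ltac:(lra) (fun k => proj1 (Hv k))) as Hlower.
  assert (HCinv : / C <= a0 / 2).
  { replace (a0 / 2) with (/ (2 / a0)) by (field; lra).
    apply Rinv_le_contravar; [apply Rdiv_lt_0_compat|]; lra. }
  split; nra.
Qed.
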